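(* Let $\overrightarrow{W}$ be a Morse sequence on a simplicial complex $K$. Then for every integer $p\ge0$, the complex $W^-_{p+1}$ collapses onto $W^+_p$.
   Context: A simplicial complex $K$ is a finite collection of non-empty finite sets closed under taking non-empty subsets; $\dim\sigma=|\sigma|-1$. A pair $(\sigma,\tau)$ with $\sigma\subsetneq\tau$ is a free pair for $K$ if $\tau$ is the only simplex other than $\sigma$ containing $\sigma$; then $K\setminus\{\sigma,\tau\}$ is an elementary collapse of $K$ and $K$ an elementary expansion of $K\setminus\{\sigma,\tau\}$. $K$ collapses onto $L$ if there is a sequence $\langle K=L_0,\dots,L_m=L\rangle$, $m\ge0$, with each $L_j$ an elementary collapse of $L_{j-1}$. If $\nu$ is a facet (maximal simplex) of $K$, $K$ is an elementary filling of $K\setminus\{\nu\}$. A Morse sequence on $K$ is a sequence $\langle\emptyset=K_0,\dots,K_k=K\rangle$ with each $K_i$ an elementary expansion or filling of $K_{i-1}$; simplices added by fillings are critical; for an expansion $K_i=K_{i-1}\cup\{\sigma,\tau\}$, $\sigma\subset\tau$, $\sigma$ is lower regular and $\tau$ upper regular. Writing $\widehat W,\underline W,\overline W$ for the sets of critical, lower regular and upper regular simplices, the lower and upper $p$-skeletons are $W^-_p=\{\nu\in\overline W:\dim\nu\le p\}\cup\{\nu\in\widehat W\cup\underline W:\dim\nu\le p-1\}$ and $W^+_p=\{\nu\in\widehat W\cup\overline W:\dim\nu\le p\}\cup\{\nu\in\underline W:\dim\nu\le p-1\}$ (these are simplicial complexes). *)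

(* Simplices are non-empty finite sets of vertices drawn from a
   finite type T; a complex is a {set {set T}}. *)
From mathcomp Require Import all_boot.
Set Implicit Arguments. Unset Strict Implicit. Unset Printing Implicit Defensive.

Section Defs.
Variable T : finType.
Local Notation cplx := {set {set T}}.

Definition simplicial_complex (K : cplx) : Prop :=
  set0 \notin K /\
  forall s t : {set T}, s \in K -> t != set0 -> t \subset s -> t \in K.

Definition free_pair (K : cplx) (s t : {set T}) : bool :=
  [&& s \proper t, s \in K, t \in K &
      [forall u : {set T}, ((u \in K) && (s \subset u)) ==> ((u == s) || (u == t))]].

(* L is the elementary collapse K \ {s,t} of K along the free pair (s,t);
   equivalently K is the elementary expansion K = L u {s,t} of L. *)
Definition elem_collapse_along (K L : cplx) (s t : {set T}) : bool :=
  free_pair K s t && (L == K :\: [set s; t]).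

Definition elem_collapse (K L : cplx) : Prop :=
  exists s t, elem_collapse_along K L s t.

Inductive collapses : cplx -> cplx -> Prop :=
| collapses_refl K : collapses K K
| collapses_step K K1 L : elem_collapse K K1 -> collapses K1 L -> collapses K L.

Definition facet (K : cplx) (nu : {set T}) : bool :=
  (nu \in K) && [forall u : {set T}, (u \in K) ==> ~~ (nu \proper u)].

Definition elem_filling_with (K K' : cplx) (nu : {set T}) : bool :=
  facet K' nu && (K == K' :\ nu).

Definition Wat (W : seq cplx) (i : nat) : cplx := nth set0 W i.

Definition morse_sequence (K : cplx) (W : seq cplx) : Prop :=
  [/\ 0 < size W, Wat W 0 = set0, last set0 W = K,
      forall i, i < size W -> simplicial_complex (Wat W i) &
      forall i, i.+1 < size W ->
        (exists s t, elem_collapse_along (Wat W i.+1) (Wat W i) s t) \/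
        (exists nu, elem_filling_with (Wat W i) (Wat W i.+1) nu)].

Definition Wcrit (W : seq cplx) : cplx :=
  [set nu | [exists i : 'I_(size W), (i.+1 < size W) &&
               elem_filling_with (Wat W i) (Wat W i.+1) nu]].

Definition Wlower (W : seq cplx) : cplx :=
  [set s | [exists i : 'I_(size W), exists t : {set T}, (i.+1 < size W) &&
               elem_collapse_along (Wat W i.+1) (Wat W i) s t]].

Definition Wupper (W : seq cplx) : cplx :=
  [set t | [exists i : 'I_(size W), exists s : {set T}, (i.+1 < size W) &&
               elem_collapse_along (Wat W i.+1) (Wat W i) s t]].

(* dim nu <= p  <->  #|nu| <= p+1 ;  dim nu <= p-1  <->  #|nu| <= p *)
Definition lower_skeleton (W : seq cplx) (p : nat) : cplx :=
  [set nu | ((nu \in Wupper W) && (#|nu| <= p.+1))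
         || (((nu \in Wcrit W) || (nu \in Wlower W)) && (#|nu| <= p))].

Definition upper_skeleton (W : seq cplx) (p : nat) : cplx :=
  [set nu | (((nu \in Wcrit W) || (nu \in Wupper W)) && (#|nu| <= p.+1))
         || ((nu \in Wlower W) && (#|nu| <= p))].

End Defs.

(** The filtration [L_n = W^+_p ∪ (W^-_{p+1} ∩ W_n)] runs from [L_0 = W^+_p] to
    [L_k = W^-_{p+1}], and each [L_{n+1}] collapses onto [L_n].  Every simplex is added
    at exactly one step of the Morse sequence, so critical, lower and upper regular
    simplices are pairwise disjoint and membership in a skeleton is decided by dimension
    alone.  A filling of [ν] leaves [L_n] unchanged: [ν ∈ W^-_{p+1}] forces [dim ν <= p],
    hence [ν ∈ W^+_p].  An expansion by [(σ, τ)] with [dim σ = p] adds exactly [σ, τ] to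
    [L_n], as a free pair, since it is free in [W_{n+1}] and no simplex of [W^+_p]
    contains [σ].  For any other [dim σ], whichever of [σ, τ] lies in [W^-_{p+1}] already
    lies in [W^+_p]. *)
From mathcomp Require Import all_boot zify.
Set Implicit Arguments. Unset Strict Implicit. Unset Printing Implicit Defensive.

Section Collapses.
Variable T : finType.
Implicit Types (A B K L U : {set {set T}}) (s t nu : {set T}).

Lemma collapses_trans A B C : collapses A B -> collapses B C -> collapses A C.
Proof. by elim=> [//|K K1 L KK1 _ IH] /IH; apply: collapses_step. Qed.

Lemma card_free_pair K s t :
  simplicial_complex K -> free_pair K s t -> #|t| = #|s|.+1.
Proof.
move=> [_ K_closed] /and4P[st _ tK /forallP t_only].
have [x xt xNs] : exists2 x, x \in t & x \notin s.
  by move: st; rewrite properE => /andP[_ /subsetPn].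
have xs_t : x |: s \subset t by rewrite subUset sub1set xt proper_sub.
have xs_K : x |: s \in K.
  by apply: K_closed tK _ xs_t; apply/set0Pn; exists x; rewrite !inE eqxx.
have := t_only (x |: s); rewrite xs_K subsetUr /= => /orP[]/eqP xs.
  by move: xNs; rewrite -xs !inE eqxx.
by rewrite -xs cardsU1 xNs.
Qed.

Lemma setD_elem_collapse K L s t :
  elem_collapse_along K L s t -> K :\: L = [set s; t].
Proof.
case/andP=> /and4P[_ sK tK _] /eqP->; rewrite setDDr setDv set0U.
by apply/setIidPr; rewrite subUset !sub1set sK tK.
Qed.

Lemma setD_elem_filling K K' nu : elem_filling_with K K' nu -> K' :\: K = [set nu].
Proof.
case/andP=> /andP[nuK' _] /eqP->; rewrite setDDr setDv set0U.
by apply/setIidPr; rewrite sub1set.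
Qed.

Lemma elem_filling_collapse K K' nu s t :
  elem_filling_with K K' nu -> ~~ elem_collapse_along K' K s t.
Proof.
move=> /setD_elem_filling fill; apply/negP=> col.
have /andP[/and4P[st _ _ _] _] := col.
have := congr1 (fun A => #|A|) (setD_elem_collapse col).
by rewrite fill cards1 cards2 (proper_neq st).
Qed.

Lemma setU_setI_setD U L A D :
  L :&: D \subset U -> U :|: (L :&: (A :\: D)) = U :|: (L :&: A).
Proof.
move=> /subsetP LD_U; apply/setP=> x; rewrite !inE.
case: (boolP (x \in U)) => //= xNU; case xD: (x \in D) => //=.
by case xL: (x \in L) => //; case/negP: xNU; apply: LD_U; rewrite inE xL xD.
Qed.

Lemma elem_collapse_along_setU U L A s t :
  free_pair A s t -> s \in L -> t \in L -> (forall u, u \in U -> ~~ (s \subset u)) ->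
  elem_collapse_along (U :|: (L :&: A)) (U :|: (L :&: (A :\: [set s; t]))) s t.
Proof.
move=> /and4P[st sA tA /forallP s_free] sL tL U_s.
have sNU : s \notin U := contraL (U_s s) (subxx s).
have tNU : t \notin U := contraL (U_s t) (proper_sub st).
apply/andP; split.
  rewrite /free_pair st !inE sL tL sA tA !orbT /=; apply/forallP=> u.
  apply/implyP; rewrite !inE => /andP[/orP[uU|/andP[_ uA]] su].
    by move: (U_s u uU); rewrite su.
  by have /implyP := s_free u; apply; rewrite uA.
apply/eqP/setP=> x; rewrite !inE.
case: (eqVneq x s) => [->|_]; first by rewrite (negbTE sNU) andbF.
by case: (eqVneq x t) => [->|_]; rewrite ?(negbTE tNU) ?andbF.
Qed.

End Collapses.

Section SkeletonInclusion.
Variables (T : finType) (W : seq {set {set T}}) (p : nat).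

Lemma upper_sub_lower_skeleton : upper_skeleton W p \subset lower_skeleton W p.+1.
Proof.
apply/subsetP=> x; rewrite [x \in upper_skeleton _ _]inE [x \in lower_skeleton _ _]inE.
by case: (x \in Wcrit W) (x \in Wupper W) (x \in Wlower W) => [] [] [] /=; lia.
Qed.

Lemma card_upper_skeleton x : x \in upper_skeleton W p -> #|x| <= p.+1.
Proof. by rewrite inE => /orP[]/andP[_]; lia. Qed.

End SkeletonInclusion.

Section MorseSequence.
Variables (T : finType) (W : seq {set {set T}}).
Hypothesis W_complex : forall i, i < size W -> simplicial_complex (Wat W i).
Hypothesis W_step : forall i, i.+1 < size W ->
  (exists s t, elem_collapse_along (Wat W i.+1) (Wat W i) s t) \/
  (exists nu, elem_filling_with (Wat W i) (Wat W i.+1) nu).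

Lemma WcritP nu : reflect
  (exists2 i, i.+1 < size W & elem_filling_with (Wat W i) (Wat W i.+1) nu)
  (nu \in Wcrit W).
Proof.
rewrite inE; apply: (iffP existsP) => [[i /andP[]]|[i lti fill]]; first by exists i.
by exists (Ordinal (ltnW lti)); rewrite lti.
Qed.

Lemma WlowerP s : reflect
  (exists i t, i.+1 < size W /\ elem_collapse_along (Wat W i.+1) (Wat W i) s t)
  (s \in Wlower W).
Proof.
rewrite inE; apply: (iffP existsP) => [[i /existsP[t /andP[]]]|[i [t [lti col]]]].
  by exists i, t.
by exists (Ordinal (ltnW lti)); apply/existsP; exists t; rewrite lti.
Qed.

Lemma WupperP t : reflect
  (exists i s, i.+1 < size W /\ elem_collapse_along (Wat W i.+1) (Wat W i) s t)
  (t \in Wupper W).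
Proof.
rewrite inE; apply: (iffP existsP) => [[i /existsP[s /andP[]]]|[i [s [lti col]]]].
  by exists i, s.
by exists (Ordinal (ltnW lti)); apply/existsP; exists s; rewrite lti.
Qed.

Lemma Wat_subset : {in [pred i | i < size W] &,
  {homo Wat W : i j / i <= j >-> (i \subset j)}}.
Proof.
apply: homo_leq_in => [A|B A C|i j _ jW k /andP[_ ltkj]|i _].
- exact: subxx.
- exact: subset_trans.
- by rewrite inE (ltn_trans ltkj).
rewrite inE => lti.
by case: (W_step lti) => [[s [t /andP[_ /eqP->]]]|[nu /andP[_ /eqP->]]];
  apply: subsetDl.
Qed.

Lemma Wat_new_uniq i j x : i.+1 < size W -> j.+1 < size W ->
  x \in Wat W i.+1 :\: Wat W i -> x \in Wat W j.+1 :\: Wat W j -> i = j.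
Proof.
have sub k l : k < l -> l.+1 < size W -> x \in Wat W k.+1 -> x \in Wat W l.
  move=> ltkl ltl; have ltlW := ltnW ltl.
  by apply/subsetP: x; apply: Wat_subset => //; rewrite inE (leq_ltn_trans ltkl ltlW).
move=> lti ltj /setDP[xi xNi] /setDP[xj xNj].
case: (ltngtP i j) => // [/sub/(_ ltj xi)|/sub/(_ lti xj)] x_old.
  by rewrite x_old in xNj.
by rewrite x_old in xNi.
Qed.

Lemma Wcrit_notin_Wregular nu :
  nu \in Wcrit W -> (nu \notin Wlower W) && (nu \notin Wupper W).
Proof.
case/WcritP=> i lti fill.
have nu_new : nu \in Wat W i.+1 :\: Wat W i by rewrite (setD_elem_filling fill) set11.
have Ncol j s t : j.+1 < size W -> elem_collapse_along (Wat W j.+1) (Wat W j) s t ->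
    nu \in [set s; t] -> False.
  move=> ltj col nu_st; have ij : i = j.
    by apply: Wat_new_uniq lti ltj nu_new _; rewrite (setD_elem_collapse col).
  by move: col; rewrite -ij; apply/negP; exact: elem_filling_collapse fill.
apply/andP; split; apply/negP.
  by case/WlowerP=> j [t [ltj /Ncol]]; apply; rewrite ?set21.
by case/WupperP=> j [s [ltj /Ncol]]; apply; rewrite ?set22.
Qed.

Lemma Wlower_notin_Wupper s : s \in Wlower W -> s \notin Wupper W.
Proof.
case/WlowerP=> i [t [lti colt]]; apply/negP=> /WupperP[j [r [ltj colr]]].
have ij : i = j.
  by apply: (Wat_new_uniq (x := s)) lti ltj _ _;
    rewrite ?(setD_elem_collapse colt) ?(setD_elem_collapse colr) ?set21 ?set22.
subst j; move: (setD_elem_collapse colt) (setD_elem_collapse colr) => -> E.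
move: colt colr => /andP[/andP[st _] _] /andP[/andP[rs _] _].
have : t \in [set r; s] by rewrite -E set22.
case/set2P=> tE; first by move: (proper_trans rs st); rewrite tE properxx.
by move: st; rewrite tE properxx.
Qed.

Lemma Wat_sub_last i : i < size W -> Wat W i \subset Wat W (size W).-1.
Proof.
move=> lti; have W_pos : 0 < size W := leq_ltn_trans (leq0n i) lti.
by apply: Wat_subset; rewrite ?inE ?ltn_predL // -ltnS prednK.
Qed.

Lemma Wclasses_sub_last x :
  [|| x \in Wcrit W, x \in Wlower W | x \in Wupper W] -> x \in Wat W (size W).-1.
Proof.
have in_last i : i.+1 < size W -> x \in Wat W i.+1 :\: Wat W i -> x \in Wat W (size W).-1.
  by move=> lti /setDP[xW _]; apply: subsetP (Wat_sub_last lti) _ xW.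
case/or3P=> [/WcritP[i lti /setD_elem_filling x_new]
            |/WlowerP[i [t [lti /setD_elem_collapse x_new]]]
            |/WupperP[i [s [lti /setD_elem_collapse x_new]]]];
  by apply: in_last lti _; rewrite x_new !inE eqxx ?orbT.
Qed.

Lemma lower_skeleton_sub_last q : lower_skeleton W q \subset Wat W (size W).-1.
Proof.
apply/subsetP=> x; rewrite inE => /orP[]/andP[x_cls _]; apply: Wclasses_sub_last.
  by rewrite x_cls !orbT.
by case/orP: x_cls => ->; rewrite ?orbT.
Qed.

Section SkeletonMembership.
Variable q : nat.

Lemma lower_skeleton_Wcrit x : x \in Wcrit W -> (x \in lower_skeleton W q) = (#|x| <= q).
Proof.
by move=> xc; have /andP[_ /negbTE xNu] := Wcrit_notin_Wregular xc;
  rewrite inE xc xNu.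
Qed.

Lemma upper_skeleton_Wcrit x : x \in Wcrit W -> (x \in upper_skeleton W q) = (#|x| <= q.+1).
Proof.
by move=> xc; have /andP[/negbTE xNl _] := Wcrit_notin_Wregular xc;
  rewrite inE xc xNl orbF.
Qed.

Lemma Wlower_notin_Wcrit x : x \in Wlower W -> x \notin Wcrit W.
Proof. by move=> xl; apply/negP=> /Wcrit_notin_Wregular; rewrite xl. Qed.

Lemma Wupper_notin_Wcrit x : x \in Wupper W -> x \notin Wcrit W.
Proof. by move=> xu; apply/negP=> /Wcrit_notin_Wregular; rewrite xu andbF. Qed.

Lemma lower_skeleton_Wlower x : x \in Wlower W -> (x \in lower_skeleton W q) = (#|x| <= q).
Proof.
move=> xl; rewrite inE xl (negbTE (Wlower_notin_Wupper xl)).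
by rewrite (negbTE (Wlower_notin_Wcrit xl)).
Qed.

Lemma upper_skeleton_Wlower x : x \in Wlower W -> (x \in upper_skeleton W q) = (#|x| <= q).
Proof.
move=> xl; rewrite inE xl (negbTE (Wlower_notin_Wupper xl)).
by rewrite (negbTE (Wlower_notin_Wcrit xl)).
Qed.

Lemma lower_skeleton_Wupper x : x \in Wupper W -> (x \in lower_skeleton W q) = (#|x| <= q.+1).
Proof.
move=> xu; have xNl : x \notin Wlower W by apply: contraTN xu => /Wlower_notin_Wupper.
by rewrite inE xu (negbTE xNl) (negbTE (Wupper_notin_Wcrit xu)) /= orbF.
Qed.

Lemma upper_skeleton_Wupper x : x \in Wupper W -> (x \in upper_skeleton W q) = (#|x| <= q.+1).
Proof.
move=> xu; have xNl : x \notin Wlower W by apply: contraTN xu => /Wlower_notin_Wupper.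
by rewrite inE xu (negbTE xNl) orbT orbF.
Qed.

End SkeletonMembership.

Section Filtration.
Variable p : nat.

Definition skeleton_filtration n :=
  upper_skeleton W p :|: (lower_skeleton W p.+1 :&: Wat W n).

Lemma skeleton_filtration_step n :
  n.+1 < size W -> collapses (skeleton_filtration n.+1) (skeleton_filtration n).
Proof.
move=> ltn; rewrite /skeleton_filtration.
case: (W_step ltn) => [[s [t col]]|[nu fill]]; last first.
  have nuc : nu \in Wcrit W by apply/WcritP; exists n.
  have /andP[_ /eqP->] := fill; rewrite setU_setI_setD; first exact: collapses_refl.
  apply/subsetP=> x /setIP[xL /set1P x_nu]; move: xL; rewrite x_nu.
  by rewrite lower_skeleton_Wcrit ?upper_skeleton_Wcrit.
have /andP[st_free /eqP->] := col.
have sl : s \in Wlower W by apply/WlowerP; exists n, t.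
have tu : t \in Wupper W by apply/WupperP; exists n, s.
have card_t := card_free_pair (W_complex ltn) st_free.
have [card_s|card_s] := eqVneq #|s| p.+1.
  have sNU : s \notin upper_skeleton W p by rewrite upper_skeleton_Wlower // card_s ltnn.
  apply: collapses_step (collapses_refl _); exists s, t.
  apply: elem_collapse_along_setU st_free _ _ _ => [||u uU].
  - by rewrite lower_skeleton_Wlower // card_s.
  - by rewrite lower_skeleton_Wupper // card_t card_s.
  apply: contra sNU => su; suff /eqP-> : s == u by [].
  by rewrite eqEcard su card_s (card_upper_skeleton uU).
rewrite setU_setI_setD; first exact: collapses_refl.
have card_s_le : #|s| <= p.+1 -> #|s| <= p by rewrite leq_eqVlt (negbTE card_s).
apply/subsetP=> x /setIP[xL /set2P[] x_st]; move: xL; rewrite x_st.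
  by rewrite lower_skeleton_Wlower ?upper_skeleton_Wlower.
by rewrite lower_skeleton_Wupper ?upper_skeleton_Wupper // card_t !ltnS.
Qed.

Lemma skeleton_filtration_collapses n :
  n < size W -> collapses (skeleton_filtration n) (skeleton_filtration 0).
Proof.
elim: n => [|n IHn] ltn; first exact: collapses_refl.
exact: collapses_trans (skeleton_filtration_step ltn) (IHn (ltnW ltn)).
Qed.

Lemma skeleton_filtration0 : Wat W 0 = set0 -> skeleton_filtration 0 = upper_skeleton W p.
Proof. by rewrite /skeleton_filtration => ->; rewrite setI0 setU0. Qed.

Lemma skeleton_filtration_last :
  skeleton_filtration (size W).-1 = lower_skeleton W p.+1.
Proof.
rewrite /skeleton_filtration (setIidPl (lower_skeleton_sub_last _)).
exact/setUidPr/upper_sub_lower_skeleton.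
Qed.

End Filtration.
End MorseSequence.

Theorem theorem6 (T : finType) (K : {set {set T}}) (W : seq {set {set T}}) :
  simplicial_complex K -> morse_sequence K W ->
  forall p : nat, collapses (lower_skeleton W p.+1) (upper_skeleton W p).
Proof.
move=> _ [W_nonempty W0 _ W_complex W_step] p.
rewrite -(skeleton_filtration_last W_step) -(skeleton_filtration0 p W0).
by apply: (skeleton_filtration_collapses W_complex W_step); rewrite prednK.
Qed.
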